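(* Let $K$ be a simplicial complex on $[m]$. The quotient map $\varrho\colon\Lambda[u_1,\ldots,u_m]\otimes\mathbb Z[K]\to R^*(K)$ induces an isomorphism in cohomology.
   Context: $\mathbb Z[K]=\mathbb Z[v_1,\dots,v_m]/\mathcal I_K$, with $\mathcal I_K$ generated by monomials $v_{i_1}\cdots v_{i_k}$, $\{i_1,\dots,i_k\}\notin K$. The Koszul algebra $\Lambda[u_1,\ldots,u_m]\otimes\mathbb Z[K]$ is the differential bigraded algebra with $\operatorname{bideg}u_i=(-1,2)$, $\operatorname{bideg}v_i=(0,2)$, $du_i=v_i$, $dv_i=0$, $d$ a derivation. $R^*(K)$ is the quotient differential bigraded algebra $\Lambda[u_1,\ldots,u_m]\otimes\mathbb Z[K]/(v_i^2=u_iv_i=0,\ i=1,\dots,m)$ (the ideal generated by the $v_i^2$ and $u_iv_i$ is $d$-stable), with the induced differential and bigrading. *)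

From HB Require Import structures.
From mathcomp Require Import all_boot all_order all_algebra.
From mathcomp Require Import finmap mpoly.
Set Implicit Arguments. Unset Strict Implicit. Unset Printing Implicit Defensive.
Import GRing.Theory.
Local Open Scope ring_scope.

(* A simplicial complex on [m] = {0,..,m-1}: a family of subsets containing
   the empty set and closed under taking subsets (ghost vertices allowed). *)
Definition simplicial_complex (m : nat) (K : {set {set 'I_m}}) : Prop :=
  set0 \in K /\ forall s t : {set 'I_m}, t \subset s -> s \in K -> t \in K.

Definition msupport (m : nat) (mon : 'X_{1..m}) : {set 'I_m} :=
  [set i | (mon i != 0)%N].

(* Z[K] is realised as the free Z-module on the monomials v^alpha with
   support in K (canonical representatives modulo the Stanley-Reisner ideal). *)
Definition inK (m : nat) (K : {set {set 'I_m}}) (mon : 'X_{1..m}) : bool :=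
  msupport mon \in K.

Definition piK (m : nat) (K : {set {set 'I_m}}) (p : {mpoly int[m]}) : {mpoly int[m]} :=
  \sum_(mon <- msupp p | inK K mon) p@_mon *: 'X_[mon].

(* Elements of the Koszul algebra Lambda[u_1..u_m] (x) Z[K]: an element
   sum_J u_J (x) p_J (u_J = u_{j1}...u_{jk}, j1 < ... < jk) is stored as the
   finite function J |-> p_J. *)
Definition koszul (m : nat) := {ffun {set 'I_m} -> {mpoly int[m]}}.

Definition validA (m : nat) (K : {set {set 'I_m}}) (x : koszul m) : Prop :=
  forall J, all (inK K) (msupp (x J)).

(* Koszul sign: d(u_J) = sum_{j in J} (-1)^{#{i in J | i < j}} u_{J\j} v_j. *)
Definition ksign (m : nat) (J : {set 'I_m}) (j : 'I_m) : int :=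
  (-1) ^+ #|[set i in J | (i < j)%N]|.

(* The Koszul differential (d u_i = v_i, d v_i = 0, d a derivation), written
   on coefficients: the u_{J'}-component of dx. *)
Definition dA (m : nat) (K : {set {set 'I_m}}) (x : koszul m) : koszul m :=
  [ffun J' : {set 'I_m} => \sum_(j : 'I_m | j \notin J')
      ksign (j |: J') j *: piK K ('X_j * x (j |: J'))].

(* R^*(K) = Koszul algebra / (v_i^2, u_i v_i): basis u_J v_I with I in K,
   I squarefree and I disjoint from J. *)
Definition goodR (m : nat) (K : {set {set 'I_m}}) (J : {set 'I_m})
    (mon : 'X_{1..m}) : bool :=
  inK K mon && [forall i, (mon i <= (i \notin J))%N].

Definition validR (m : nat) (K : {set {set 'I_m}}) (y : koszul m) : Prop :=
  forall J, all (goodR K J) (msupp (y J)).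

(* The quotient map rho, on canonical representatives: kill the basis
   monomials lying in the ideal (v_i^2, u_i v_i). *)
Definition rho (m : nat) (K : {set {set 'I_m}}) (x : koszul m) : koszul m :=
  [ffun J => \sum_(mon <- msupp (x J) | goodR K J mon) (x J)@_mon *: 'X_[mon]].

Definition dR (m : nat) (K : {set {set 'I_m}}) (y : koszul m) : koszul m :=
  rho K (dA K y).

(* A chain map f : (A, dA) -> (B, dB) between cochain complexes of abelian
   groups (carried by subgroups PA, PB) induces an isomorphism
   H(A) = ker dA / im dA  ->  H(B) = ker dB / im dB, [a] |-> [f a]:
   the induced map is surjective and injective. *)
Definition induces_iso_in_cohomology (A B : zmodType)
    (PA : A -> Prop) (dA : A -> A) (PB : B -> Prop) (dB : B -> B) (f : A -> B)
    : Prop :=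
  (forall b, PB b -> dB b = 0 ->
     exists a, [/\ PA a, dA a = 0 &
       exists c, PB c /\ b = f a + dB c]) /\
  (forall a, PA a -> dA a = 0 ->
     (exists c, PB c /\ f a = dB c) ->
     exists a', PA a' /\ a = dA a').

From HB Require Import structures.
From mathcomp Require Import all_boot all_order all_algebra.
From mathcomp Require Import finmap mpoly.
From mathcomp Require Import ring zify.
Set Implicit Arguments. Unset Strict Implicit. Unset Printing Implicit Defensive.
Import GRing.Theory.
Local Open Scope ring_scope.

(* R^*(K) is both a quotient and a subcomplex of the Koszul algebra A: its basis
   monomials u_J v^I (I squarefree, disjoint from J, in K) span a d-stable
   subgroup on which rho is the identity, which gives surjectivity.  The kernel
   of rho is spanned by the monomials divisible by some v_i^2 or u_i v_i, and it
   is acyclic: trading v_i for u_i at the first such index i defines a map h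
   with dh + hd = id there.  So if a is a cocycle with rho a = dc, then
   a - rho a = d(h(a - rho a)) and a = d(c + h(a - rho a)). *)

Lemma setU1D1 (T : finType) (A : {set T}) (k i : T) : k != i ->
  (k |: A) :\ i = k |: (A :\ i).
Proof.
move=> ne_ki; apply/setP => y; rewrite !inE.
by case: (eqVneq y i) => [->|_]; rewrite ?andbT ?andbF //= eq_sym (negbTE ne_ki).
Qed.

Section Monomials.
Variable m : nat.
Implicit Types (J : {set 'I_m}) (mon : 'X_{1..m}) (p : {mpoly int[m]}).

Lemma mcoeff_sumX (r : seq 'X_{1..m}) (P : pred 'X_{1..m}) (g : 'X_{1..m} -> int) mon :
  uniq r ->
  (\sum_(mon' <- r | P mon') g mon' *: 'X_[mon'] : {mpoly int[m]})@_mon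
   = if (mon \in r) && P mon then g mon else 0.
Proof.
move=> ur; rewrite raddf_sum /=.
under eq_bigr do rewrite mcoeffZ mcoeffX.
rewrite big_mkcond /=; case: ifP => [/andP[r_mon P_mon]|not_mon].
  rewrite (bigD1_seq mon) //= P_mon eqxx mulr1 big1 ?addr0 // => i ne.
  by case: (P i); rewrite // (negbTE ne) mulr0.
rewrite big1_seq // => i /andP[_ r_i]; case: ifP => // P_i.
by case: eqP => [e|]; [subst; rewrite r_i P_i in not_mon | rewrite mulr0].
Qed.

Lemma mcoeff_msupp_sumX (P : pred 'X_{1..m}) p mon :
  (\sum_(mon' <- msupp p | P mon') p@_mon' *: 'X_[mon'])@_mon
   = if P mon then p@_mon else 0.
Proof.
rewrite mcoeff_sumX ?msupp_uniq //.
case: ifP => [/andP[_ ->]//|]; case: ifP => // _; rewrite andbT => not_mon.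
by rewrite memN_msupp_eq0 // not_mon.
Qed.

Lemma mcoeffXM (j : 'I_m) p mon :
  ('X_j * p)@_mon = if (0 < mon j)%N then p@_(mon - U_(j))%MM else 0.
Proof.
rewrite mulrC; case: ifP => mon_j.
  have le_mon : (U_(j) <= mon)%MM by rewrite lep1mP -lt0n.
  by rewrite -{1}(submK le_mon) addmC mcoeffMX.
apply: memN_msupp_eq0; rewrite (perm_mem (msuppMX _ _)).
apply/mapP => -[mon' _ E]; move: mon_j; rewrite E mnmDE mnm1E eqxx.
by case: (mon' j).
Qed.

Lemma msupport_addm1 mon (i : 'I_m) :
  (0 < mon i)%N -> msupport (mon + U_(i))%MM = msupport mon.
Proof.
move=> mon_i; apply/setP => k; rewrite !inE mnmDE mnm1E.
case: (eqVneq i k) => [<-|_]; last by rewrite addn0.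
by rewrite addn1; move: mon_i; case: (mon i).
Qed.

Lemma msupportS mon mon' : (mon' <= mon)%MM -> msupport mon' \subset msupport mon.
Proof.
move/mnm_lepP => le_mon; apply/subsetP => k; rewrite !inE -!lt0n => mon'_k.
exact: leq_trans mon'_k (le_mon k).
Qed.

Lemma koszulP (x y : koszul m) :
  (forall J mon, (x J)@_mon = (y J)@_mon) -> x = y.
Proof. by move=> eq_xy; apply/ffunP => J; apply/mpolyP => mon; exact: eq_xy. Qed.

Lemma koszul0 J : (0 : koszul m) J = 0.
Proof. by rewrite ffunE. Qed.

Lemma koszulB (x y : koszul m) J : (x - y) J = x J - y J.
Proof. by rewrite !ffunE. Qed.

Lemma card_ltU1 (S : {set 'I_m}) (j k : 'I_m) : j \notin S ->
  #|[set x in j |: S | (x < k)%N]| = (#|[set x in S | (x < k)%N]| + (j < k))%N.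
Proof.
move=> jNS; case: (ltnP j k) => jk /=.
  have -> : [set x in j |: S | (x < k)%N] = j |: [set x in S | (x < k)%N].
    by apply/setP => x; rewrite !inE; case: eqP => // ->; rewrite jk.
  by rewrite cardsU1 inE (negbTE jNS) addnC.
have -> : [set x in j |: S | (x < k)%N] = [set x in S | (x < k)%N].
  apply/setP => x; rewrite !inE; case: eqP => // ->.
  by rewrite (negbTE jNS) ltnNge jk.
by rewrite addn0.
Qed.

Lemma ksignU1 (S : {set 'I_m}) (j k : 'I_m) : j \notin S ->
  ksign (j |: S) k = ksign S k * (-1) ^+ (j < k)%N.
Proof. by move=> jNS; rewrite /ksign card_ltU1 // exprD. Qed.

Lemma ksignU1_id (S : {set 'I_m}) (j : 'I_m) : j \notin S ->
  ksign (j |: S) j = ksign S j.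
Proof. by move=> jNS; rewrite ksignU1 // ltnn mulr1. Qed.

Lemma ksignK (S : {set 'I_m}) (j : 'I_m) : ksign S j * ksign S j = 1.
Proof. by rewrite -expr2 sqrr_sign. Qed.

(* The cross terms of dh + hd cancel by this identity. *)
Lemma ksign_exchange J (i k : 'I_m) : i \in J -> k \notin J ->
  ksign (k |: J) k * ksign (k |: J) i = - (ksign J i * ksign (k |: (J :\ i)) k).
Proof.
move=> iJ kNJ.
have kNJi : k \notin J :\ i by rewrite inE negb_and kNJ orbT.
rewrite ksignU1_id // ksignU1 // ksignU1_id // -{1}(setD1K iJ) ksignU1 ?setD11 //.
have ne_ik : i != k by apply: contraNneq kNJ => <-.
have : (i < k)%N || (k < i)%N by rewrite -neq_ltn.
by case: (ltngtP i k) => // _ _; rewrite ?expr0 ?expr1; ring.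
Qed.

Definition ideal_witness J mon : option 'I_m :=
  [pick i | (1 < mon i + (i \in J))%N].

Lemma ideal_witness_shift J mon (j : 'I_m) : j \notin J -> (0 < mon j)%N ->
  ideal_witness (j |: J) (mon - U_(j))%MM = ideal_witness J mon.
Proof.
move=> jNJ mon_j; apply: eq_pick => i; rewrite /= mnmBE mnm1E in_setU1.
case: (eqVneq j i) => [<-|_] /=; last by rewrite subn0.
by rewrite (negbTE jNJ) addn0 subn1 addn1 prednK.
Qed.

Lemma ideal_witnessP J mon i :
  ideal_witness J mon = Some i -> (1 < mon i + (i \in J))%N.
Proof. by rewrite /ideal_witness; case: pickP => // k witness_k [<-]. Qed.

End Monomials.

Section StanleyReisner.
Variables (m : nat) (K : {set {set 'I_m}}).
Implicit Types (J : {set 'I_m}) (mon : 'X_{1..m}) (x y z : koszul m).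

Lemma mcoeff_piK p mon : (piK K p)@_mon = if inK K mon then p@_mon else 0.
Proof. exact: mcoeff_msupp_sumX. Qed.

Lemma mcoeff_rho x J mon :
  (rho K x J)@_mon = if goodR K J mon then (x J)@_mon else 0.
Proof. by rewrite ffunE mcoeff_msupp_sumX. Qed.

Lemma mcoeff_dA x J mon : (dA K x J)@_mon = if inK K mon then
    \sum_(j | j \notin J) ksign (j |: J) j *
      (if (0 < mon j)%N then (x (j |: J))@_(mon - U_(j))%MM else 0)
  else 0.
Proof.
rewrite ffunE raddf_sum /=.
under eq_bigr do rewrite mcoeffZ mcoeff_piK mcoeffXM.
by case: ifP => // _; rewrite big1 // => j _; rewrite mulr0.
Qed.

Lemma goodR_witness J mon :
  goodR K J mon = inK K mon && (ideal_witness J mon == None).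
Proof.
rewrite /goodR /ideal_witness; congr (_ && _).
case: pickP => [i witness_i | none] /=.
  by apply/negbTE/forallPn; exists i; move: witness_i; case: (i \in J) => /=; lia.
by apply/forallP => i; move: (none i); case: (i \in J) => /=; lia.
Qed.

Lemma inK_lem mon mon' : simplicial_complex K ->
  (mon' <= mon)%MM -> inK K mon -> inK K mon'.
Proof. by move=> [_ K_closed] /msupportS; exact: K_closed. Qed.

Lemma validAP x : validA K x <-> forall J mon, ~~ inK K mon -> (x J)@_mon = 0.
Proof.
split => [Ax J mon monNK | Ax J].
  by apply: memN_msupp_eq0; apply: contra monNK => /(allP (Ax J)).
by apply/allP => mon; rewrite mcoeff_msupp; apply: contraR => /Ax ->.
Qed.

Lemma validRP y : validR K y <-> forall J mon, ~~ goodR K J mon -> (y J)@_mon = 0.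
Proof.
split => [Ry J mon monNR | Ry J].
  by apply: memN_msupp_eq0; apply: contra monNR => /(allP (Ry J)).
by apply/allP => mon; rewrite mcoeff_msupp; apply: contraR => /Ry ->.
Qed.

Lemma validAD x y : validA K x -> validA K y -> validA K (x + y).
Proof.
move=> /validAP Ax /validAP Ay; apply/validAP => J mon monNK.
by rewrite ffunE mcoeffD Ax ?Ay ?addr0.
Qed.

Lemma validAN x : validA K x -> validA K (- x).
Proof.
move/validAP => Ax; apply/validAP => J mon /Ax.
by rewrite ffunE mcoeffN => ->; rewrite oppr0.
Qed.

Lemma validRN y : validR K y -> validR K (- y).
Proof.
move/validRP => Ry; apply/validRP => J mon /Ry.
by rewrite ffunE mcoeffN => ->; rewrite oppr0.
Qed.

Lemma validR_validA y : validR K y -> validA K y.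
Proof.
move/validRP => Ry; apply/validAP => J mon monNK; apply: Ry.
by rewrite goodR_witness (negbTE monNK).
Qed.

Lemma dA_is_zmod_morphism : zmod_morphism (dA K).
Proof.
move=> x y; apply: koszulP => J mon; rewrite koszulB mcoeffB !mcoeff_dA.
case: ifP => _; last by rewrite subr0.
rewrite -sumrB; apply: eq_bigr => j _; rewrite koszulB mcoeffB.
by case: ifP => _; rewrite ?subr0 ?mulr0 // mulrBr.
Qed.

HB.instance Definition _ := GRing.isZmodMorphism.Build _ _ (dA K) dA_is_zmod_morphism.

Lemma rho_is_zmod_morphism : zmod_morphism (rho K).
Proof.
move=> x y; apply: koszulP => J mon.
rewrite koszulB mcoeffB !mcoeff_rho koszulB mcoeffB.
by case: ifP; rewrite ?subr0.
Qed.

HB.instance Definition _ := GRing.isZmodMorphism.Build _ _ (rho K) rho_is_zmod_morphism.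

Lemma validR_rho x : validR K (rho K x).
Proof. by apply/validRP => J mon monNR; rewrite mcoeff_rho (negbTE monNR). Qed.

Lemma rho_id y : validR K y -> rho K y = y.
Proof.
move/validRP => Ry; apply: koszulP => J mon.
by rewrite mcoeff_rho; case: ifP => // /negbT /Ry.
Qed.

Lemma rho_idem x : rho K (rho K x) = rho K x.
Proof. exact/rho_id/validR_rho. Qed.

Lemma validR_dA y : validR K y -> validR K (dA K y).
Proof.
move/validRP => Ry; apply/validRP => J mon; rewrite goodR_witness negb_and mcoeff_dA.
case: ifP => //= monK witness_mon; rewrite big1 // => j jNJ.
case: ifP => mon_j; last by rewrite mulr0.
by rewrite Ry ?mulr0 // goodR_witness ideal_witness_shift // (negbTE witness_mon) andbF.
Qed.

Lemma dR_validR y : validR K y -> dR K y = dA K y.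
Proof. by move=> Ry; rewrite /dR rho_id //; exact: validR_dA. Qed.

Lemma rho_dA_ker z : validA K z -> rho K z = 0 -> rho K (dA K z) = 0.
Proof.
move=> /validAP Az rho_z; apply: koszulP => J mon.
rewrite mcoeff_rho koszul0 mcoeff0 goodR_witness.
case: ifP => // /andP[monK /eqP witness_mon]; rewrite mcoeff_dA monK big1 // => j jNJ.
case: ifP => mon_j; last by rewrite mulr0.
case: (boolP (inK K (mon - U_(j))%MM)) => [mon'K | /Az ->]; last by rewrite mulr0.
have : (rho K z (j |: J))@_(mon - U_(j))%MM = 0 by rewrite rho_z koszul0 mcoeff0.
rewrite mcoeff_rho goodR_witness mon'K ideal_witness_shift // witness_mon /=.
by move=> ->; rewrite mulr0.
Qed.

(* h replaces v_i by u_i, i being the first index at which u_J v^mon lies in the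
   ideal (v_i^2, u_i v_i); the move does not change that index, which is what
   makes h a contracting homotopy of the ideal. *)
Definition homotopy_coef x J mon : int :=
  if ideal_witness J mon is Some i then
    if i \in J then ksign J i * (x (J :\ i))@_(mon + U_(i))%MM else 0
  else 0.

Definition homotopy_support x J : seq 'X_{1..m} :=
  [seq (mon - U_(i))%MM | i <- enum J, mon <- msupp (x (J :\ i))].

Definition homotopy x : koszul m :=
  [ffun J => \sum_(mon <- undup (homotopy_support x J))
     homotopy_coef x J mon *: 'X_[mon]].

Lemma mcoeff_homotopy x J mon : (homotopy x J)@_mon = homotopy_coef x J mon.
Proof.
rewrite ffunE (@mcoeff_sumX _ _ xpredT) ?undup_uniq // mem_undup andbT.
case: ifP => // monN; rewrite /homotopy_coef; case: ideal_witness => // i.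
case: ifP => // iJ; rewrite memN_msupp_eq0 ?mulr0 //.
apply: contraFN monN => in_supp; apply/allpairsPdep.
by exists i, (mon + U_(i))%MM; rewrite mem_enum iJ in_supp addmK.
Qed.

Lemma homotopy0 : homotopy 0 = 0.
Proof.
apply: koszulP => J mon; rewrite mcoeff_homotopy /homotopy_coef !koszul0 mcoeff0.
by case: ideal_witness => // i; case: ifP; rewrite ?koszul0 ?mcoeff0 ?mulr0.
Qed.

Lemma validA_homotopy x : simplicial_complex K -> validA K x -> validA K (homotopy x).
Proof.
move=> SC /validAP Ax; apply/validAP => J mon monNK.
rewrite mcoeff_homotopy /homotopy_coef; case: ideal_witness => // i.
case: ifP => // _; rewrite Ax ?mulr0 //; apply: contra monNK.
exact/(inK_lem SC)/lem_addr.
Qed.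

Lemma mcoeff_homotopy_shift x J mon (i j : 'I_m) :
  ideal_witness J mon = Some i -> j \notin J -> (0 < mon j)%N ->
  (homotopy x (j |: J))@_(mon - U_(j))%MM =
    if i \in j |: J then
      ksign (j |: J) i * (x ((j |: J) :\ i))@_(mon - U_(j) + U_(i))%MM
    else 0.
Proof.
move=> witness_i jNJ mon_j.
by rewrite mcoeff_homotopy /homotopy_coef ideal_witness_shift // witness_i.
Qed.

Lemma dA_homotopy_witness_notin x J mon i :
  inK K mon -> ideal_witness J mon = Some i -> i \notin J ->
  (dA K (homotopy x) J)@_mon = (x J)@_mon.
Proof.
move=> monK witness_i iNJ.
have mon_i : (0 < mon i)%N.
  by move: (ideal_witnessP witness_i); rewrite (negbTE iNJ); lia.
rewrite mcoeff_dA monK (bigD1 i) //= mon_i (mcoeff_homotopy_shift _ witness_i) //.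
rewrite setU11 setU1K //.
rewrite submK ?lep1mP -?lt0n // mulrA ksignK mul1r big1 ?addr0 // => j /andP[jNJ ne_ji].
case: ifP => mon_j; last by rewrite mulr0.
rewrite (mcoeff_homotopy_shift _ witness_i) // in_setU1 (negbTE iNJ) orbF.
by rewrite eq_sym (negbTE ne_ji) mulr0.
Qed.

Lemma dA_homotopy_witness_in x J mon i :
  inK K mon -> ideal_witness J mon = Some i -> i \in J ->
  (dA K (homotopy x) J)@_mon + ksign J i * (dA K x (J :\ i))@_(mon + U_(i))%MM
    = (x J)@_mon.
Proof.
move=> monK witness_i iJ.
have mon_i : (0 < mon i)%N by move: (ideal_witnessP witness_i); rewrite iJ; lia.
rewrite [in X in _ + X]mcoeff_dA /inK msupport_addm1 // -/(inK K mon) monK.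
rewrite (bigD1 i) ?setD11 //= setD1K // mnmDE mnm1E eqxx addn1 /= addmK.
rewrite mulrDr mulrA ksignK mul1r addrCA -[RHS]addr0; congr (_ + _).
rewrite mcoeff_dA monK mulr_sumr.
rewrite [in X in _ + X](eq_bigl (fun k => k \notin J)) => [|k]; last first.
  by case: (eqVneq k i) => [->|ne_ki]; rewrite !inE ?iJ ?ne_ki ?andbF ?andbT.
rewrite -big_split big1 // => k kNJ /=.
have ne_ki : k != i by apply: contraNneq kNJ => ->.
rewrite mnmDE mnm1E eq_sym (negbTE ne_ki) addn0.
case: ifP => mon_k; last by rewrite !mulr0 addr0.
rewrite (mcoeff_homotopy_shift _ witness_i) // in_setU1 iJ orbT setU1D1 //.
rewrite addmC addmBA ?lep1mP -?lt0n // addmC.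
by rewrite mulrA ksign_exchange //; ring.
Qed.

Lemma homotopy_formula x : validA K x -> rho K x = 0 ->
  dA K (homotopy x) + homotopy (dA K x) = x.
Proof.
move=> /validAP Ax rho_x; apply: koszulP => J mon.
rewrite ffunE mcoeffD [in X in _ + X]mcoeff_homotopy /homotopy_coef.
case: (boolP (inK K mon)) => [monK | monNK]; last first.
  rewrite mcoeff_dA (negbTE monNK) add0r Ax //.
  case witness: ideal_witness => [i|] //; case: ifP => // iJ.
  rewrite mcoeff_dA /inK msupport_addm1 -/(inK K mon) ?(negbTE monNK) ?mulr0 //.
  by move: (ideal_witnessP witness); rewrite iJ; lia.
case witness: ideal_witness => [i|]; last first.
  have : (rho K x J)@_mon = 0 by rewrite rho_x koszul0 mcoeff0.
  rewrite mcoeff_rho goodR_witness monK witness /= => ->.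
  rewrite addr0 mcoeff_dA monK big1 // => j jNJ.
  case: ifP => mon_j; last by rewrite mulr0.
  by rewrite mcoeff_homotopy /homotopy_coef ideal_witness_shift // witness mulr0.
case: ifP => iJ; first exact: dA_homotopy_witness_in.
by rewrite addr0 (dA_homotopy_witness_notin _ monK witness) ?iJ.
Qed.

End StanleyReisner.

Theorem lemma4p4 (m : nat) (K : {set {set 'I_m}}) :
  simplicial_complex K ->
  induces_iso_in_cohomology (validA K) (dA K) (validR K) (dR K) (rho K).
Proof.
move=> SC; split.
- move=> b Rb dRb; exists b; split; first exact: validR_validA.
    by rewrite -dR_validR.
  exists 0; split; first by apply/validRP => J mon _; rewrite koszul0 mcoeff0.
  by rewrite /dR !raddf0 addr0 rho_id.
- move=> a Aa dAa [c [Rc rho_a]].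
  set z := a - rho K a.
  have Az : validA K z by apply/validAD/validAN/validR_validA/validR_rho.
  have rho_z : rho K z = 0 by rewrite raddfB /= rho_idem subrr.
  have dAz : dA K z = 0.
    have Rdz : validR K (dA K z).
      by rewrite raddfB /= dAa sub0r; apply/validRN/validR_dA/validR_rho.
    by rewrite -(rho_id Rdz) rho_dA_ker.
  have dA_hz : dA K (homotopy z) = z.
    by rewrite -[RHS](homotopy_formula Az rho_z) dAz homotopy0 addr0.
  exists (c + homotopy z); split.
    exact: validAD (validR_validA Rc) (validA_homotopy SC Az).
  by rewrite raddfD /= dA_hz -dR_validR // -rho_a /z addrC subrK.
Qed.
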